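(* Let $p,q\ge 1$ be integers. Let $\mu=(\mu_1,\dots,\mu_p)$ and $\nu=(\nu_1,\dots,\nu_q)$ be independent random probability vectors, with $\mu$ uniformly distributed on the probability simplex $\{\mu\in[0,1]^p:\sum_u\mu_u=1\}$ (Dirichlet law $\mathcal D_p$ with all parameters equal to $1$) and $\nu$ uniformly distributed on the probability simplex in $\mathbb{R}^q$ (Dirichlet law $\mathcal D_q$). Define $$\Delta=\mathbb{E}\left[\sum_{u=1}^p\sum_{v=1}^q\Big(\mu_u\nu_v-\Big(\frac{\mu_u}{q}+\frac{\nu_v}{p}-\frac{1}{pq}\Big)\Big)^2\right].$$ Then $$\Delta=\frac{1}{pq}\cdot\frac{p-1}{p+1}\cdot\frac{q-1}{q+1}\le\frac{1}{pq}.$$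
   Context: For margins $\mu,\nu$, the independence coupling is $(\mu\otimes\nu)_{u,v}=\mu_u\nu_v$ and the indetermination coupling is $(\mu\oplus\nu)_{u,v}=\frac{\mu_u}{q}+\frac{\nu_v}{p}-\frac{1}{pq}$; $\Delta$ is the expected squared Euclidean distance between them. *)

From Stdlib Require Import Reals List Arith Factorial.
From Coquelicot Require Import Coquelicot.
Import ListNotations.
Open Scope R_scope.

Definition sumR (n : nat) (f : nat -> R) : R :=
  fold_right Rplus 0 (map f (seq 0 n)).

(* simplex_int n G s = integral of G(x_1,...,x_n) over the region
   { x_i >= 0, x_1 + ... + x_n <= s }  (iterated Riemann integral;
   the integral over the 0-dimensional region is evaluation at []). *)
Fixpoint simplex_int (n : nat) (G : list R -> R) (s : R) : R :=
  match n with
  | O => G nil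
  | S m => RInt (fun t => simplex_int m (fun xs => G (t :: xs)) (s - t)) 0 s
  end.

(* Expectation of g(mu) for mu ~ D_p = Dirichlet(1,...,1), i.e. uniform on
   the probability simplex of R^p (p >= 1).  The law is given by its
   standard density: (mu_1,...,mu_{p-1}) has density (p-1)! on
   { x_i >= 0, sum x_i <= 1 } and mu_p = 1 - (mu_1 + ... + mu_{p-1}).
   A vector mu is represented as a list of length p, mu_u = nth (u-1) mu 0. *)
Definition dirichlet_expect (p : nat) (g : list R -> R) : R :=
  INR (Factorial.fact (p - 1)) *
  simplex_int (p - 1) (fun xs => g (xs ++ [1 - fold_right Rplus 0 xs])) 1.

Definition sq_dist_couplings (p q : nat) (mu nu : list R) : R :=
  sumR p (fun u => sumR q (fun v =>
    (nth u mu 0 * nth v nu 0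
     - (nth u mu 0 / INR q + nth v nu 0 / INR p - 1 / (INR p * INR q))) ^ 2)).

(* Delta: expectation for independent mu ~ D_p, nu ~ D_q
   (product law, i.e. iterated expectation). *)
Definition Delta_pq (p q : nat) : R :=
  dirichlet_expect p (fun mu => dirichlet_expect q (fun nu => sq_dist_couplings p q mu nu)).

(* The two couplings differ by a product:
   mu_u nu_v - (mu_u / q + nu_v / p - 1 / (p q)) = (mu_u - 1/p) (nu_v - 1/q),
   so Delta = E |mu - 1/p|^2 * E |nu - 1/q|^2 by independence.  Integrating out one coordinate
   at a time keeps the integrand of the form c + d sum x_i^2 + e (s - sum x_i)^2
   weighted by simplex volumes r^k / k!, which yields E |mu - 1/p|^2 = (p-1)/(p(p+1)). *)

From Stdlib Require Import Reals List Lra Lia Factorial.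
From Coquelicot Require Import Coquelicot.
Import ListNotations.
Open Scope R_scope.

Definition simplex_vol (k : nat) (r : R) : R := r ^ k / INR (fact k).

Lemma simplex_vol_S_0 k : simplex_vol (S k) 0 = 0.
Proof. unfold simplex_vol; simpl; lra. Qed.

Lemma is_derive_simplex_vol k r : is_derive (simplex_vol (S k)) r (simplex_vol k r).
Proof.
  unfold simplex_vol. auto_derive; [easy|].
  change (match k with 0%nat => 1 | S _ => INR k + 1 end) with (INR (S k)).
  change (fact k + k * fact k)%nat with (fact (S k)).
  rewrite fact_simpl, mult_INR.
  pose proof (INR_fact_neq_0 k); pose proof (not_0_INR (S k) (Nat.neq_succ_0 k)).
  field; auto.
Qed.

Lemma is_RInt_simplex_vol k s :
  is_RInt (fun t => simplex_vol k (s - t)) 0 s (simplex_vol (S k) s).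
Proof.
  evar_last.
  - apply (is_RInt_derive (fun t => - simplex_vol (S k) (s - t))).
    + intros t _. evar_last.
      * apply (is_derive_opp (fun t => simplex_vol (S k) (s - t))).
        apply (is_derive_comp (simplex_vol (S k)) (fun t => s - t));
          [apply is_derive_simplex_vol | auto_derive; easy].
      * change (- (-1 * simplex_vol k (s - t)) = simplex_vol k (s - t)). ring.
    + intros x _. apply (ex_derive_continuous (fun t => simplex_vol k (s - t))).
      unfold simplex_vol; auto_derive; easy.
  - unfold minus, plus, opp; simpl. rewrite Rminus_eq_0, Rminus_0_r, simplex_vol_S_0. ring.
Qed.

Lemma is_RInt_simplex_vol_comb k s a0 a1 a2 :
  is_RInt (fun t => a0 * simplex_vol k (s - t) + a1 * simplex_vol (S k) (s - t)
                    + a2 * simplex_vol (S (S k)) (s - t)) 0 s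
    (a0 * simplex_vol (S k) s + a1 * simplex_vol (S (S k)) s + a2 * simplex_vol (S (S (S k))) s).
Proof.
  pose proof (fun j a => is_RInt_scal _ 0 s a _ (is_RInt_simplex_vol j s)) as Hscal.
  apply (is_RInt_plus (V := R_NormedModule)); [apply (is_RInt_plus (V := R_NormedModule))|];
  apply Hscal.
Qed.

(* Expand t = s - (s - t): each factor (s - t) raises the index of [simplex_vol]. *)
Lemma sq_mul_simplex_vol_sub k s t :
  t ^ 2 * simplex_vol k (s - t)
  = s ^ 2 * simplex_vol k (s - t) - 2 * s * INR (S k) * simplex_vol (S k) (s - t)
    + INR (S k) * INR (S (S k)) * simplex_vol (S (S k)) (s - t).
Proof.
  unfold simplex_vol; simpl pow; rewrite !fact_simpl, !mult_INR.
  pose proof (INR_fact_neq_0 k); pose proof (pos_INR k); rewrite !S_INR.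
  field; lra.
Qed.

Lemma RInt_quadratic_mul_simplex_vol m s c d K :
  RInt (fun t => (c + d * t ^ 2) * simplex_vol m (s - t) + K * simplex_vol (S (S m)) (s - t)) 0 s
  = c * simplex_vol (S m) s + (2 * d + K) * simplex_vol (S (S (S m))) s.
Proof.
  apply is_RInt_unique.
  evar_last.
  - eapply is_RInt_ext;
      [| apply (is_RInt_simplex_vol_comb m s (c + d * s ^ 2) (- 2 * d * s * INR (S m))
                  (d * INR (S m) * INR (S (S m)) + K))].
    (* the equation lives in the normed-module carrier, which [ring] does not see as R *)
    intros t _; match goal with |- ?a = ?b => change (a = b :> R) end.
    replace ((c + d * t ^ 2) * simplex_vol m (s - t))
      with (c * simplex_vol m (s - t) + d * (t ^ 2 * simplex_vol m (s - t))) by ring.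
    rewrite sq_mul_simplex_vol_sub. ring.
  - unfold simplex_vol; simpl pow; rewrite !fact_simpl, !mult_INR.
    pose proof (INR_fact_neq_0 m); pose proof (pos_INR m); rewrite !S_INR.
    field; lra.
Qed.

Definition sum_list (xs : list R) : R := fold_right Rplus 0 xs.

Definition sum_sq (xs : list R) : R := sum_list (map (fun x => x ^ 2) xs).

Lemma simplex_int_ext n G1 G2 s :
  (forall xs, length xs = n -> G1 xs = G2 xs) -> simplex_int n G1 s = simplex_int n G2 s.
Proof.
  revert G1 G2 s; induction n as [|n IH]; intros G1 G2 s HG; simpl.
  - now apply HG.
  - apply RInt_ext; intros t _. apply IH; intros xs Hxs. apply HG. simpl; now rewrite Hxs.
Qed.

Lemma simplex_int_quadratic n c d e s :
  simplex_int n (fun xs => c + d * sum_sq xs + e * (s - sum_list xs) ^ 2) s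
  = c * simplex_vol n s + (2 * d * INR n + 2 * e) * simplex_vol (S (S n)) s.
Proof.
  revert c s; induction n as [|n IH]; intros c s.
  - unfold simplex_vol, sum_sq, sum_list; simpl; field.
  - cbn [simplex_int].
    rewrite (RInt_ext _ (fun t => (c + d * t ^ 2) * simplex_vol n (s - t)
                                  + (2 * d * INR n + 2 * e) * simplex_vol (S (S n)) (s - t))).
    + rewrite RInt_quadratic_mul_simplex_vol, S_INR. ring.
    + intros t _. rewrite <- IH.
      apply simplex_int_ext; intros xs _. unfold sum_sq, sum_list; simpl; ring.
Qed.

Lemma sumR_succ n f : sumR (S n) f = f 0%nat + sumR n (fun i => f (S i)).
Proof. unfold sumR; simpl. now rewrite <- seq_shift, map_map. Qed.

Lemma sumR_ext n f g : (forall i, f i = g i) -> sumR n f = sumR n g.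
Proof. intros Hfg; unfold sumR; now rewrite (map_ext f g Hfg). Qed.

Lemma sumR_mult_l n c f : sumR n (fun i => c * f i) = c * sumR n f.
Proof. unfold sumR; induction (seq 0 n) as [|i l IH]; simpl; [ring | rewrite IH; ring]. Qed.

Lemma sumR_mult_r n c f : sumR n (fun i => f i * c) = sumR n f * c.
Proof. unfold sumR; induction (seq 0 n) as [|i l IH]; simpl; [ring | rewrite IH; ring]. Qed.

Lemma sumR_nth_snoc f xs y :
  sumR (S (length xs)) (fun u => f (nth u (xs ++ [y]) 0)) = sum_list (map f xs) + f y.
Proof.
  induction xs as [|x xs IH]; unfold sum_list in *; simpl.
  - unfold sumR; simpl; ring.
  - rewrite sumR_succ; simpl. rewrite IH; ring.
Qed.

Lemma sum_list_map_sq_sub a xs :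
  sum_list (map (fun x => (x - a) ^ 2) xs)
  = sum_sq xs - 2 * a * sum_list xs + INR (length xs) * a ^ 2.
Proof.
  induction xs as [|x xs IH]; unfold sum_sq, sum_list in *; cbn [map fold_right length].
  - simpl; ring.
  - rewrite IH, S_INR; ring.
Qed.

Definition sq_dist_uniform (p : nat) (mu : list R) : R :=
  sumR p (fun u => (nth u mu 0 - 1 / INR p) ^ 2).

Lemma sq_dist_couplings_eq_mul p q mu nu : (0 < p)%nat -> (0 < q)%nat ->
  sq_dist_couplings p q mu nu = sq_dist_uniform p mu * sq_dist_uniform q nu.
Proof.
  intros hp hq.
  assert (INR p <> 0) by (apply not_0_INR; lia).
  assert (INR q <> 0) by (apply not_0_INR; lia).
  unfold sq_dist_couplings, sq_dist_uniform.
  rewrite <- sumR_mult_r; apply sumR_ext; intros u.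
  rewrite <- sumR_mult_l; apply sumR_ext; intros v.
  field; auto.
Qed.

Lemma dirichlet_expect_ext p g1 g2 :
  (forall mu, g1 mu = g2 mu) -> dirichlet_expect p g1 = dirichlet_expect p g2.
Proof. intros Hg; unfold dirichlet_expect; f_equal; apply simplex_int_ext; auto. Qed.

Definition mean_sq_dist_uniform (p : nat) : R := (INR p - 1) / (INR p * (INR p + 1)).

(* The factor [a] is built in because [RInt] is linear only on integrable functions. *)
Lemma dirichlet_expect_scaled_sq_dist_uniform p a : (0 < p)%nat ->
  dirichlet_expect p (fun mu => a * sq_dist_uniform p mu) = a * mean_sq_dist_uniform p.
Proof.
  intros hp; destruct p as [|n]; [lia|].
  unfold dirichlet_expect, mean_sq_dist_uniform; replace (S n - 1)%nat with n by lia.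
  pose proof (pos_INR n).
  rewrite (simplex_int_ext n _ (fun xs => - a / INR (S n) + a * sum_sq xs
                                          + a * (1 - sum_list xs) ^ 2)).
  - rewrite simplex_int_quadratic.
    unfold simplex_vol; simpl pow; rewrite !fact_simpl, !mult_INR.
    pose proof (INR_fact_neq_0 n); rewrite !S_INR.
    rewrite pow1; field; repeat split; (lra || auto).
  - intros xs Hxs. unfold sq_dist_uniform.
    rewrite <- Hxs, (sumR_nth_snoc (fun x => (x - 1 / INR (S (length xs))) ^ 2)).
    rewrite sum_list_map_sq_sub, Hxs, S_INR.
    unfold sum_list; field; lra.
Qed.

Lemma sub_one_div_add_one_bounds x : 1 <= x -> 0 <= (x - 1) / (x + 1) <= 1.
Proof.
  intros Hx; split.
  - apply Rdiv_le_0_compat; lra.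
  - apply (Rdiv_le_1 (x - 1) (x + 1)); lra.
Qed.

Lemma Delta_pq_eq_mul p q : (0 < p)%nat -> (0 < q)%nat ->
  Delta_pq p q = mean_sq_dist_uniform q * mean_sq_dist_uniform p.
Proof.
  intros hp hq; unfold Delta_pq.
  rewrite <- dirichlet_expect_scaled_sq_dist_uniform by exact hp.
  apply dirichlet_expect_ext; intros mu.
  rewrite Rmult_comm, <- dirichlet_expect_scaled_sq_dist_uniform by exact hq.
  apply dirichlet_expect_ext; intros nu.
  now apply sq_dist_couplings_eq_mul.
Qed.

Theorem mainTheorem1 (p q : nat) (hp : (1 <= p)%nat) (hq : (1 <= q)%nat) :
  Delta_pq p q = 1 / (INR p * INR q) * ((INR p - 1) / (INR p + 1)) * ((INR q - 1) / (INR q + 1))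
  /\ Delta_pq p q <= 1 / (INR p * INR q).
Proof.
  assert (HP : 1 <= INR p) by (apply (le_INR 1); lia).
  assert (HQ : 1 <= INR q) by (apply (le_INR 1); lia).
  assert (Hclosed : Delta_pq p q
    = 1 / (INR p * INR q) * ((INR p - 1) / (INR p + 1)) * ((INR q - 1) / (INR q + 1))).
  { rewrite Delta_pq_eq_mul by assumption; unfold mean_sq_dist_uniform; field; lra. }
  split; [exact Hclosed|].
  rewrite Hclosed, Rmult_assoc.
  pose proof (sub_one_div_add_one_bounds _ HP); pose proof (sub_one_div_add_one_bounds _ HQ).
  assert (0 < 1 / (INR p * INR q)) by (apply Rdiv_lt_0_compat; nra).
  rewrite <- (Rmult_1_r (1 / (INR p * INR q))) at 2.
  apply Rmult_le_compat_l; nra.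
Qed.
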